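(* Let $M\geq 1$ and consider the bilateral cooperation model described in the context, restricted to submodular utility vectors. Then every DSIC mechanism that works for arbitrary submodular valuations (i.e. is DSIC and is evaluated over all pairs of submodular buyer and seller vectors) has competitive ratio at most $1/H_M$, where $H_M=\sum_{j=1}^M \frac1j$ is the $M$-th harmonic number.
   Context: Bilateral cooperation model: there are two agents, a buyer and a seller, and options $0,1,\dots,M$. A buyer utility vector is $b=(b_1,\dots,b_M)\in\mathbb{R}^M$ and a seller utility vector is $s=(s_1,\dots,s_M)\in\mathbb{R}^M$; by convention $b_0=s_0=0$. A vector $v=(v_1,\dots,v_M)$ (with $v_0=0$) is submodular if $v_{i+1}-v_i\leq v_i-v_{i-1}$ for every $i\in\{1,\dots,M-1\}$. Define $\mathrm{Feasible}(b,s)=\{i\in\{0,\dots,M\}: b_i\geq 0 \text{ and } s_i\geq 0\}$ and $OPT(b,s)=\max_{i\in \mathrm{Feasible}(b,s)}(b_i+s_i)$. A mechanism is a function $r$ mapping each pair of reported vectors $(b',s')$ to a probability vector $(r_0(b',s'),\dots,r_M(b',s'))$. The mechanism is DSIC if for all true vectors $b,s$ and reports $b',s'$ (all in the admissible class): $\sum_{i=1}^M r_i(b,s')\,b_i\geq \sum_{i=1}^M r_i(b',s')\,b_i$ and $\sum_{i=1}^M r_i(b',s)\,s_i\geq \sum_{i=1}^M r_i(b',s')\,s_i$. The gain is $G_r(b,s)=\sum_{i=1}^M r_i(b,s)(b_i+s_i)$ and the competitive ratio is the minimum of $G_r(b,s)/OPT(b,s)$ over admissible (here: submodular) $b,s$.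 *)

From HB Require Import structures.
From mathcomp Require Import all_boot all_order all_algebra.
From mathcomp Require Import reals.
Set Implicit Arguments. Unset Strict Implicit. Unset Printing Implicit Defensive.
Import Order.TTheory GRing.Theory Num.Theory.
Local Open Scope ring_scope.

(* A utility vector over options 0..M is a function 'I_M.+1 -> R; the
   convention v_0 = 0 is part of admissibility. *)
Definition uvec (R : realType) (M : nat) := 'I_M.+1 -> R.

Definition submodular (R : realType) (M : nat) (v : uvec R M) : Prop :=
  v ord0 = 0 /\
  forall i : 'I_M.+1, (0 < i)%N -> (i < M)%N ->
    v (inord i.+1) - v i <= v i - v (inord i.-1).

Definition prob_vec (R : realType) (M : nat) (p : uvec R M) : Prop :=
  (forall i, 0 <= p i) /\ \sum_(i < M.+1) p i = 1.

Definition mechanism (R : realType) (M : nat) := uvec R M -> uvec R M -> uvec R M.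

Definition is_mechanism (R : realType) (M : nat) (r : mechanism R M) : Prop :=
  forall b s, prob_vec (r b s).

Definition expu (R : realType) (M : nat) (p v : uvec R M) : R :=
  \sum_(i < M.+1 | i != ord0) p i * v i.

Definition DSIC (R : realType) (M : nat) (r : mechanism R M) : Prop :=
  forall b s b' s' : uvec R M,
    submodular b -> submodular s -> submodular b' -> submodular s' ->
    expu (r b s') b >= expu (r b' s') b /\
    expu (r b' s) s >= expu (r b' s') s.

(* OPT(b,s) = max over feasible i (b_i >= 0 and s_i >= 0) of b_i + s_i;
   option 0 is always feasible with value 0, so seeding the max with 0 is exact. *)
Definition OPT (R : realType) (M : nat) (b s : uvec R M) : R :=
  \big[Num.max/0]_(i < M.+1 | (0 <= b i) && (0 <= s i)) (b i + s i).

Definition gain (R : realType) (M : nat) (r : mechanism R M) (b s : uvec R M) : R :=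
  \sum_(i < M.+1 | i != ord0) r b s i * (b i + s i).

Definition harmonic (R : realType) (M : nat) : R :=
  \sum_(1 <= j < M.+1) (j%:R)^-1.

From HB Require Import structures.
From mathcomp Require Import all_boot all_order all_algebra.
From mathcomp Require Import reals.
From mathcomp Require Import ring lra.
From Stdlib Require Import Classical_Prop.
Set Implicit Arguments. Unset Strict Implicit. Unset Printing Implicit Defensive.
Import Order.TTheory GRing.Theory Num.Theory.
Local Open Scope ring_scope.

(* Take the linear seller valuation s_i = i and the buyer valuations
   b^t_i = 1 - i/t (t = 1..M), all submodular, and suppose r is
   rho-competitive.  Scaling the seller by a large C at the instance (b^t, s),
   where option t has welfare C t, and invoking seller truthfulness shows that
   the seller's utility at (b^t, s) is at least rho t - 1/C; scaling the buyer
   at (b^1, s) shows that the buyer's utility there is at least -M/C.  Since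
   b^(t+1) = b^t + s/(t(t+1)) on options i > 0, buyer truthfulness between the
   reports b^t and b^(t+1) raises the buyer's utility by at least
   rho/(t+1) - 1/C per step, so at b^M it is at least rho (H_M - 1) - 2M/C.
   But b^M + s/M is 1 on every option i > 0, so the buyer's utility plus a
   1/M share of the seller's is at most 1, whence rho H_M <= 1 + (2M+1)/C for
   every C > 0. *)

Section UtilityVectors.
Variables (R : realType) (M : nat).
Implicit Types (p v w : uvec R M) (C c : R).

Definition linear_uvec : uvec R M := fun i => (i : nat)%:R.

Definition falling_uvec (t : nat) : uvec R M :=
  fun i => if (i : nat) == 0%N then 0 else 1 - (i : nat)%:R / t%:R.

Definition scale_uvec C v : uvec R M := fun i => C * v i.

Lemma le_OPT v w (i : 'I_M.+1) : 0 <= v i -> 0 <= w i -> v i + w i <= OPT v w.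
Proof.
by move=> v_ge0 w_ge0; apply: (le_bigmax_cond _ (fun j => v j + w j)); rewrite v_ge0.
Qed.

Lemma expu_scale p C v : expu p (scale_uvec C v) = C * expu p v.
Proof. by rewrite /expu mulr_sumr; apply: eq_bigr => i _; rewrite mulrCA. Qed.

Lemma gainE (r : mechanism R M) v w :
  gain r v w = expu (r v w) v + expu (r v w) w.
Proof. by rewrite /gain /expu -big_split; apply: eq_bigr => i _; rewrite mulrDr. Qed.

Lemma prob_vec_sum_le1 p : prob_vec p -> \sum_(i < M.+1 | i != ord0) p i <= 1.
Proof. by case=> p_ge0; rewrite (bigD1 ord0) //= => <-; rewrite lerDr. Qed.

Lemma expu_le_const p v c : prob_vec p -> 0 <= c ->
  (forall i : 'I_M.+1, i != ord0 -> v i <= c) -> expu p v <= c.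
Proof.
move=> p_prob c_ge0 v_le; have [p_ge0 _] := p_prob.
apply: (@le_trans _ _ (\sum_(i < M.+1 | i != ord0) p i * c)).
  by apply: ler_sum => i i_neq0; rewrite ler_wpM2l ?v_le.
by rewrite -mulr_suml ler_piMl ?prob_vec_sum_le1.
Qed.

Lemma submodular_scale C v : 0 <= C -> submodular v -> submodular (scale_uvec C v).
Proof.
move=> C_ge0 [v0 v_sub]; split; first by rewrite /scale_uvec v0 mulr0.
by move=> i i_gt0 i_ltM; rewrite /scale_uvec -!mulrBr ler_wpM2l ?v_sub.
Qed.

Lemma inord_neighbours (i : 'I_M.+1) : (i < M)%N ->
  (inord i.+1 : 'I_M.+1) = i.+1 :> nat /\ (inord i.-1 : 'I_M.+1) = i.-1 :> nat.
Proof.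
by move=> i_ltM; rewrite !inordK // (leq_ltn_trans (leq_pred _) (ltn_ord i)).
Qed.

Lemma submodular_linear : submodular linear_uvec.
Proof.
split=> // i i_gt0 i_ltM; rewrite /linear_uvec.
have [-> ->] := inord_neighbours i_ltM.
by case: i i_gt0 i_ltM => [[|j] ?] //= _ _; rewrite -!natr1; lra.
Qed.

Lemma submodular_falling t : (0 < t)%N -> submodular (falling_uvec t).
Proof.
move=> t_gt0; split=> // i i_gt0 i_ltM; rewrite /falling_uvec.
have [-> ->] := inord_neighbours i_ltM.
have tV_ge0 : 0 <= t%:R^-1 :> R by rewrite invr_ge0.
case: i i_gt0 i_ltM => [[|[|j]] ?] //= _ _; rewrite -!natr1 !mulrDl ?mul0r !mul1r; lra.
Qed.

Lemma falling_uvec_root t : (0 < t)%N -> (t <= M)%N -> falling_uvec t (inord t) = 0.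
Proof.
move=> t_gt0 t_leM; rewrite /falling_uvec inordK ?ltnS // eqn0Ngt t_gt0 /=.
by rewrite divff ?subrr // pnatr_eq0 -lt0n.
Qed.

Lemma expu_falling_le1 p t : prob_vec p -> expu p (falling_uvec t) <= 1.
Proof.
move=> p_prob; apply: expu_le_const => // i _; rewrite /falling_uvec.
by case: ifP => // _; rewrite gerBl divr_ge0.
Qed.

Lemma expu_linear_leM p : prob_vec p -> expu p linear_uvec <= M%:R.
Proof. by move=> p_prob; apply: expu_le_const => // i _; rewrite ler_nat -ltnS. Qed.

Lemma falling_uvecE t (i : 'I_M.+1) :
  i != ord0 -> falling_uvec t i = 1 - (i : nat)%:R / t%:R.
Proof. by move=> i_neq0; rewrite /falling_uvec ifF //; exact: contraNF i_neq0. Qed.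

Lemma expu_falling_succ p t : (0 < t)%N ->
  expu p (falling_uvec t.+1) =
    expu p (falling_uvec t) + expu p linear_uvec / (t.+1%:R * t%:R).
Proof.
move=> t_gt0; rewrite /expu mulr_suml -big_split; apply: eq_bigr => i i_neq0 /=.
rewrite !falling_uvecE // /linear_uvec.
have t_neq0 : t%:R != 0 :> R by rewrite pnatr_eq0 -lt0n.
have t1_neq0 : t%:R + 1 != 0 :> R by rewrite natr1 pnatr_eq0.
by rewrite -!natr1; field; apply/andP.
Qed.

Lemma expu_falling_linear p : (0 < M)%N ->
  expu p (falling_uvec M) + expu p linear_uvec / M%:R = \sum_(i < M.+1 | i != ord0) p i.
Proof.
move=> M_gt0; rewrite /expu mulr_suml -big_split; apply: eq_bigr => i i_neq0 /=.
rewrite falling_uvecE // /linear_uvec.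
have M_neq0 : M%:R != 0 :> R by rewrite pnatr_eq0 -lt0n.
by field.
Qed.

End UtilityVectors.

Lemma harmonicS (R : realType) n : harmonic R n.+1 = harmonic R n + n.+1%:R^-1.
Proof. by rewrite /harmonic big_nat_recr. Qed.

Lemma harmonic1 (R : realType) : harmonic R 1 = 1.
Proof. by rewrite /harmonic big_nat1 invr1. Qed.

Lemma harmonic_gt0 (R : realType) n : (0 < n)%N -> 0 < harmonic R n.
Proof.
move=> n_gt0; rewrite /harmonic big_ltn ?ltnS // invr1 ltr_pwDl //.
by rewrite sumr_ge0 // => j _; rewrite invr_ge0.
Qed.

Lemma lb_div_mul (R : realFieldType) (rho c y m n : R) :
  0 <= c -> 1 <= m -> 1 <= n -> rho * n - c <= y -> rho / m - c <= y / (m * n).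
Proof.
move=> c_ge0 m_ge1 n_ge1 y_ge.
have m_gt0 := lt_le_trans ltr01 m_ge1; have n_gt0 := lt_le_trans ltr01 n_ge1.
have mn_gt0 : 0 < m * n by rewrite mulr_gt0.
apply: (@le_trans _ _ ((rho * n - c) / (m * n))); last by rewrite ler_pM2r ?invr_gt0.
have -> : (rho * n - c) / (m * n) = rho / m - c / (m * n).
  by field; rewrite !gt_eqF.
by rewrite lerD2l lerN2 ler_pdivrMr // ler_peMr // mulr_ege1.
Qed.

Definition competitive (R : realType) (M : nat) (r : mechanism R M) (rho : R) :=
  forall b s : uvec R M, submodular b -> submodular s -> 0 < OPT b s ->
    rho * OPT b s <= gain r b s.

Section CompetitiveBound.
Variables (R : realType) (M : nat) (r : mechanism R M) (rho C : R).
Hypotheses (M_gt0 : (0 < M)%N) (r_mech : is_mechanism r) (r_dsic : DSIC r).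
Hypotheses (rho_ge0 : 0 <= rho) (r_comp : competitive r rho) (C_gt0 : 0 < C).

Local Notation lin := (@linear_uvec R M).
Local Notation fall t := (@falling_uvec R M t).
Local Notation buyer_u t := (expu (r (fall t) lin) (fall t)).
Local Notation seller_u t := (expu (r (fall t) lin) lin).

Lemma seller_utility_lb t : (0 < t)%N -> (t <= M)%N -> rho * t%:R - C^-1 <= seller_u t.
Proof.
move=> t_gt0 t_leM.
have fall_sub := submodular_falling R M t_gt0.
have Clin_sub := submodular_scale (ltW C_gt0) (submodular_linear R M).
have opt_ge : C * t%:R <= OPT (fall t) (scale_uvec C lin).
  have fall_root : fall t (inord t) = 0 by exact: falling_uvec_root.
  have Clin_t : scale_uvec C lin (inord t) = C * t%:R.
    by rewrite /scale_uvec /linear_uvec inordK ?ltnS.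
  apply: le_trans (le_OPT (i := inord t) _ _); rewrite ?fall_root ?Clin_t ?add0r //.
  exact: mulr_ge0 (ltW C_gt0) (ler0n _ t).
have Ct_gt0 : 0 < C * t%:R by rewrite mulr_gt0 ?ltr0n.
have comp := r_comp fall_sub Clin_sub (lt_le_trans Ct_gt0 opt_ge).
rewrite gainE expu_scale in comp.
have buyer_le1 := expu_falling_le1 t (r_mech (fall t) (scale_uvec C lin)).
have seller_ic := (r_dsic fall_sub (submodular_linear R M) fall_sub Clin_sub).2.
have rho_opt := ler_wpM2l rho_ge0 opt_ge.
have C_seller_ic := ler_wpM2l (ltW C_gt0) seller_ic.
by rewrite -(ler_pM2l C_gt0) mulrBr mulfV ?gt_eqF //; lra.
Qed.

Lemma buyer_utility_lb1 : - (M%:R / C) <= buyer_u 1.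
Proof.
have fall1_sub := submodular_falling R M (ltn0Sn 0).
have Cfall1_sub := submodular_scale (ltW C_gt0) fall1_sub.
have opt_ge : 1 <= OPT (scale_uvec C (fall 1)) lin.
  have Cfall1_root : scale_uvec C (fall 1) (inord 1) = 0.
    by rewrite /scale_uvec falling_uvec_root ?mulr0.
  have lin1 : lin (inord 1) = 1 by rewrite /linear_uvec inordK.
  by apply: le_trans (le_OPT (i := inord 1) _ _); rewrite ?Cfall1_root ?lin1 ?add0r.
have comp := r_comp Cfall1_sub (submodular_linear R M) (lt_le_trans ltr01 opt_ge).
rewrite gainE expu_scale in comp.
have seller_leM := expu_linear_leM (r_mech (scale_uvec C (fall 1)) lin).
have buyer_ic :=
  (r_dsic fall1_sub (submodular_linear R M) Cfall1_sub (submodular_linear R M)).1.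
have rho_opt : 0 <= rho * OPT (scale_uvec C (fall 1)) lin.
  by rewrite mulr_ge0 // (le_trans ler01).
have C_buyer_ic := ler_wpM2l (ltW C_gt0) buyer_ic.
by rewrite -(ler_pM2l C_gt0) mulrN mulrCA mulfV ?gt_eqF // mulr1; lra.
Qed.

Lemma buyer_utility_succ t : (0 < t)%N -> buyer_u t + seller_u t / (t.+1%:R * t%:R) <= buyer_u t.+1.
Proof.
move=> t_gt0; rewrite -expu_falling_succ //.
exact: (r_dsic (submodular_falling R M (ltn0Sn t)) (submodular_linear R M)
          (submodular_falling R M t_gt0) (submodular_linear R M)).1.
Qed.

Lemma buyer_utility_lb t : (0 < t)%N -> (t <= M)%N ->
  rho * (harmonic R t - 1) - (M + t)%:R / C <= buyer_u t.
Proof.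
have CV_gt0 : 0 < C^-1 by rewrite invr_gt0.
elim: t => [//|[|t] IH] _ t_leM.
  rewrite harmonic1 subrr mulr0 sub0r natrD mulrDl.
  by apply: le_trans buyer_utility_lb1; rewrite lerN2 lerDl ltW ?mul1r.
have seller := seller_utility_lb (ltn0Sn t) (ltnW t_leM).
have seller_share : rho / t.+2%:R - C^-1 <= seller_u t.+1 / (t.+2%:R * t.+1%:R).
  by apply: lb_div_mul seller; rewrite ?invr_ge0 ?ler1n ?(ltW C_gt0).
rewrite (harmonicS R t.+1) addnS -(natr1 (R := R) (M + t.+1)%N).
move: seller_share (IH isT (ltnW t_leM)) (buyer_utility_succ (ltn0Sn t)).
move: (seller_u t.+1 / _) (t.+2%:R^-1) ((M + t.+1)%:R) => share inv k.
lra.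
Qed.

Lemma rho_harmonic_le : rho * harmonic R M - (M.*2.+1)%:R / C <= 1.
Proof.
have seller_share : rho / 1 - C^-1 <= seller_u M / (1 * M%:R).
  apply: lb_div_mul (seller_utility_lb M_gt0 (leqnn M));
    by rewrite ?invr_ge0 ?ler1n ?(ltW C_gt0).
rewrite divr1 mul1r in seller_share.
have := prob_vec_sum_le1 (r_mech (fall M) lin).
rewrite -expu_falling_linear // -addnn -addn1 !natrD.
move: seller_share (buyer_utility_lb M_gt0 (leqnn M)); rewrite natrD.
move: (seller_u M / _) => share.
lra.
Qed.

End CompetitiveBound.

Lemma competitive_harmonic_le1 (R : realType) (M : nat) (r : mechanism R M) (rho : R) :
  (0 < M)%N -> is_mechanism r -> DSIC r -> 0 <= rho -> competitive r rho ->
  rho * harmonic R M <= 1.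
Proof.
move=> M_gt0 r_mech r_dsic rho_ge0 r_comp; apply/ler_addgt0Pr => e e_gt0.
have k_gt0 : 0 < (M.*2.+1)%:R :> R by rewrite ltr0n.
have := rho_harmonic_le M_gt0 r_mech r_dsic rho_ge0 r_comp (divr_gt0 k_gt0 e_gt0).
by rewrite invf_div mulrCA mulfV ?gt_eqF // mulr1 lerBlDr.
Qed.

Theorem theorem2 (R : realType) (M : nat) (hM : (1 <= M)%N)
  (r : mechanism R M) :
  is_mechanism r -> DSIC r ->
  forall eps : R, 0 < eps ->
  exists b s : uvec R M,
    [/\ submodular b, submodular s, 0 < OPT b s &
        gain r b s < ((harmonic R M)^-1 + eps) * OPT b s].
Proof.
move=> r_mech r_dsic eps eps_gt0; apply: NNPP => no_witness.
have H_gt0 := harmonic_gt0 R hM.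
have rho_gt0 : 0 < (harmonic R M)^-1 + eps by rewrite addr_gt0 ?invr_gt0.
have r_comp : competitive r ((harmonic R M)^-1 + eps).
  move=> b s b_sub s_sub opt_gt0; rewrite leNgt; apply/negP => gain_lt.
  by apply: no_witness; exists b, s.
have := competitive_harmonic_le1 hM r_mech r_dsic (ltW rho_gt0) r_comp.
by rewrite mulrDl mulVf ?gt_eqF // gerDl leNgt mulr_gt0.
Qed.
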